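(* Let $K$ be a field and $(Q,f,g,c,W)$ as in the setting below, with completed Jacobian algebra $\Lambda$, and assume that either $Q$ satisfies $(\star)$, or $Q$ satisfies $(\diamond)$ and $\prod_{\alpha\in\Omega}c_\alpha\neq1$ for $\Omega$ a set of representatives of the $g$-orbits. Then for every arrow $\alpha\in Q_1$, $$\alpha\cdot f(\alpha)\cdot f^2(\alpha)\cdot\alpha=0\quad\text{and}\quad \alpha\cdot g(\alpha)\cdots g^{n_\alpha-1}(\alpha)\cdot\alpha=0\quad\text{in }\Lambda.$$
   Context: Setting: $Q$ is a finite quiver with vertex set $Q_0$ and arrow set $Q_1$, connected, without loops or $2$-cycles, every vertex being the source of exactly two arrows and the target of exactly two arrows, equipped with bijections $f,g:Q_1\to Q_1$ such that for each $\alpha$, $\{f(\alpha),g(\alpha)\}$ is the set of the two arrows starting at the target of $\alpha$, and $f^3=\mathrm{id}$. $n_\alpha$ is the size of the $g$-orbit of $\alpha$. $c:Q_1\to K^\times$ is constant on $g$-orbits. Paths compose left to right ($\alpha\cdot\beta$ is $\alpha$ followed by $\beta$). $W=\sum_\alpha \alpha\cdot f(\alpha)\cdot f^2(\alpha)-\sum_\beta c_\beta\,\beta\cdot g(\beta)\cdots g^{n_\beta-1}(\beta)$ (sums over representatives of $f$-orbits, resp. $g$-orbits). $\Lambda=\widehat{KQ}/\overline{(\partial_\alpha W:\alpha\in Q_1)}$ is the completed Jacobian algebra. $(\star)$: for every $\alpha$, $n_\alpha\ge4$ or $n_{f(\alpha)}\ge4$. $(\diamond)$: $n_\alpha=3$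 for all $\alpha$. *)

From HB Require Import structures.
From mathcomp Require Import all_boot all_order all_algebra.
Set Implicit Arguments. Unset Strict Implicit. Unset Printing Implicit Defensive.
Import GRing.Theory.
Local Open Scope ring_scope.

Section Quiver.
Variables (K : fieldType) (Q0 Q1 : finType) (s t : Q1 -> Q0).

(* A path is (start vertex, list of arrows, composed left to right);
   (v, [::]) is the trivial path e_v. *)
Definition valid_path (v : Q0) (p : seq Q1) : bool :=
  if p is a :: p' then (s a == v) && path (fun a b => t a == s b) a p' else true.

Definition path_tgt (v : Q0) (p : seq Q1) : Q0 := last v (map t p).

Definition quiver_adj : rel Q0 :=
  fun x y => [exists a, ((s a == x) && (t a == y)) || ((s a == y) && (t a == x))].
Definition quiver_connected : Prop := forall u v, connect quiver_adj u v.

(* Elements of the completed path algebra \widehat{KQ}: arbitrary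
   K-valued functions on paths (formal, possibly infinite, sums of paths).
   Values on non-valid (v,p) are irrelevant and are killed by ps_mul. *)
Definition pser := Q0 -> seq Q1 -> K.
Definition ps_zero : pser := fun _ _ => 0.
Definition ps_add (x y : pser) : pser := fun v p => x v p + y v p.
Definition ps_scale (k : K) (x : pser) : pser := fun v p => k * x v p.
Definition ps_mul (x y : pser) : pser := fun v p =>
  if valid_path v p then
    \sum_(k < (size p).+1) x v (take k p) * y (path_tgt v (take k p)) (drop k p)
  else 0.
Definition ps_path (v0 : Q0) (q : seq Q1) : pser :=
  fun v p => if (v == v0) && (p == q) then 1 else 0.

(* A finite potential: a formal K-linear combination of cycles
   (each cycle a nonempty list of arrows). *)
Definition potential := seq (K * seq Q1).

Definition cycderiv_seq (al : Q1) (cyc : seq Q1) : pser := fun v p =>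
  \sum_(i < size cyc | nth al cyc i == al)
     ps_path (t al) (drop i.+1 cyc ++ take i cyc) v p.

Definition cycderiv (al : Q1) (W : potential) : pser := fun v p =>
  \sum_(kc <- W) kc.1 * cycderiv_seq al kc.2 v p.

Definition in_gen_ideal (dW : Q1 -> pser) (y : pser) : Prop :=
  exists l : seq (Q1 * pser * pser),
    forall v p, y v p = \sum_(x <- l) ps_mul (ps_mul x.1.2 (dW x.1.1)) x.2 v p.

(* x lies in the closure (arrow-ideal-adic topology) of that ideal, i.e.
   x = 0 in \widehat{KQ} / closure(dW b : b in Q1).  The basic
   neighbourhoods of 0 are m^n = elements vanishing on paths of length < n. *)
Definition zero_in_jacobian (dW : Q1 -> pser) (x : pser) : Prop :=
  forall n : nat, exists y, in_gen_ideal dW y /\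
    forall v p, valid_path v p -> (size p < n)%N -> x v p = y v p.

End Quiver.

(* The potential W = sum_{f-orbit reps a} a f(a) f^2(a)
                     - sum_{g-orbit reps b} c_b b g(b) ... g^{n_b - 1}(b),
   where n_b = fingraph.order g b is the size of the g-orbit of b,
   and representatives are the canonical roots (froots). *)
Definition W_fg (K : fieldType) (Q1 : finType) (f g : Q1 -> Q1) (c : Q1 -> K)
  : potential K Q1 :=
  [seq (1, traject f a 3) | a <- enum (froots f)] ++
  [seq (- c b, traject g b (fingraph.order g b)) | b <- enum (froots g)].

(* The relation dW_b = f(b) f^2(b) - c_b g(b)...g^(n_b - 1)(b) lets one replace,
   inside any path, the two arrows f(b) f^2(b) by c_b times the rest of the
   g-cycle of b.  Applied twice to a "zigzag" d f(d) g(f(d)), it gives a multiple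
   of a longer path containing the zigzag of another arrow d', the length growing
   by (n_d' - 3) + (n_f(d') - 3).  Under (star) the growth is positive, so every
   zigzag is congruent to arbitrarily long paths and lies in the closure of the
   ideal.  Under (diamond) two steps return to the same zigzag multiplied by the
   product of c over four g-orbits, which by connectivity are all the g-orbits;
   as this product is not 1, the zigzag lies in the ideal.  Both relations of the
   theorem are one substitution away from a path starting with a zigzag. *)

From HB Require Import structures.
From mathcomp Require Import all_boot all_order all_algebra.
From mathcomp Require Import zify.
Import GRing.Theory.
Local Open Scope ring_scope.

Set Implicit Arguments. Unset Strict Implicit. Unset Printing Implicit Defensive.

Lemma sum_take_eq (T : eqType) (V : nmodType) (r p : seq T) (F : nat -> V) :
  \sum_(k < (size r).+1) (if take k r == p then F k else 0) =
  if take (size p) r == p then F (size p) else 0.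
Proof.
have size_p (i : 'I_(size r).+1) : take i r == p -> val i = size p.
  by move=> /eqP <-; rewrite size_takel // -ltnS.
case: ifP => [Hp | Hnp].
  have lt_p : (size p < (size r).+1)%N.
    by rewrite ltnS -(eqP Hp) size_take; case: ifP => // /ltnW.
  rewrite (bigD1 (Ordinal lt_p)) //= Hp big1 ?addr0 // => i ne_i.
  case: ifP => // /size_p ip; case/eqP: ne_i; exact: val_inj.
rewrite big1 // => i _; case: ifP => // Hi.
by rewrite -(size_p i Hi) Hi in Hnp.
Qed.

Section PathSeries.
Variables (K : fieldType) (Q0 Q1 : finType) (s t : Q1 -> Q0).
Local Notation valid := (valid_path s t).
Local Notation tgt := (path_tgt t).
Local Notation mul := (@ps_mul K Q0 Q1 s t).
Local Notation path := (ps_path K).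

Lemma valid_path_cat u p q : valid u (p ++ q) = valid u p && valid (tgt u p) q.
Proof.
case: p => [|a p] //=; rewrite /path_tgt /= cat_path -andbA.
by congr (_ && (_ && _)); case: q => [|b q] //=; rewrite last_map eq_sym.
Qed.

Lemma path_tgt_cat u p q : tgt u (p ++ q) = tgt (tgt u p) q.
Proof. by rewrite /path_tgt map_cat last_cat. Qed.

Lemma path_tgt_rcons u p a : tgt u (rcons p a) = t a.
Proof. by rewrite /path_tgt map_rcons last_rcons. Qed.

Lemma valid_path_take u r k : valid u r -> valid u (take k r).
Proof. by rewrite -{1}(cat_take_drop k r) valid_path_cat => /andP[]. Qed.

Lemma valid_path_drop u r k : valid u r -> valid (tgt u (take k r)) (drop k r).
Proof. by rewrite -{1}(cat_take_drop k r) valid_path_cat => /andP[]. Qed.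

Lemma ps_mul_eq_valid x x' y y' :
  (forall u r, valid u r -> x u r = x' u r) ->
  (forall u r, valid u r -> y u r = y' u r) ->
  forall u r, mul x y u r = mul x' y' u r.
Proof.
move=> Ex Ey u r; rewrite /ps_mul; case: ifP => // V.
by apply: eq_bigr => k _; rewrite Ex ?Ey ?valid_path_drop ?valid_path_take.
Qed.

Lemma ps_mulZl k x y u r : mul (ps_scale k x) y u r = k * mul x y u r.
Proof.
rewrite /ps_mul; case: ifP => _; last by rewrite mulr0.
by rewrite mulr_sumr; apply: eq_bigr => i _; rewrite mulrA.
Qed.

Lemma ps_mulBl x1 x2 k y u r :
  mul (fun u r => x1 u r - k * x2 u r) y u r = mul x1 y u r - k * mul x2 y u r.
Proof.
rewrite /ps_mul; case: ifP => _; last by rewrite mulr0 subr0.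
by rewrite mulr_sumr -sumrB; apply: eq_bigr => i _; rewrite mulrBl mulrA.
Qed.

Lemma ps_mulBr x y1 y2 k u r :
  mul x (fun u r => y1 u r - k * y2 u r) u r = mul x y1 u r - k * mul x y2 u r.
Proof.
rewrite /ps_mul; case: ifP => _; last by rewrite mulr0 subr0.
by rewrite mulr_sumr -sumrB; apply: eq_bigr => i _; rewrite mulrBr mulrCA.
Qed.

Lemma ps_mul_path v p q u r : valid u r ->
  mul (path v p) (path (tgt v p) q) u r = path v (p ++ q) u r.
Proof.
move=> V; rewrite /ps_mul V /ps_path.
pose F k := if (u == v) && (tgt u (take k r) == tgt v p) && (drop k r == q)
            then 1 else 0 : K.
rewrite (eq_bigr (fun k : 'I_(size r).+1 => if take k r == p then F k else 0)).
  rewrite sum_take_eq /F; case: eqP => [Ep | Enp]; last first.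
    by case: ifP => // /andP[_ /eqP Er]; rewrite Er take_size_cat in Enp.
  have -> : r = p ++ drop (size p) r by rewrite -{1}(cat_take_drop (size p) r) Ep.
  rewrite take_size_cat // drop_size_cat // eqseq_cat // eqxx.
  by case: (u =P v) => [-> | _] /=; rewrite ?eqxx.
move=> i _; rewrite /F; case: (take i r =P p) => [-> | _]; last by rewrite andbF mul0r.
by case: (u =P v) => [-> | _]; rewrite ?mul1r ?mul0r.
Qed.

Variable dW : Q1 -> pser K Q0 Q1.
Local Notation ideal := (in_gen_ideal s t dW).

Lemma in_gen_ideal0 : ideal (@ps_zero K Q0 Q1).
Proof. by exists [::] => v p; rewrite big_nil. Qed.

Lemma in_gen_idealD y1 y2 : ideal y1 -> ideal y2 -> ideal (ps_add y1 y2).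
Proof.
by move=> [l1 E1] [l2 E2]; exists (l1 ++ l2) => u r; rewrite big_cat /ps_add E1 E2.
Qed.

Lemma in_gen_idealZ k y : ideal y -> ideal (ps_scale k y).
Proof.
move=> [l E]; exists [seq (x.1.1, ps_scale k x.1.2, x.2) | x <- l] => u r.
rewrite big_map /ps_scale E mulr_sumr; apply: eq_bigr => x _ /=.
by rewrite -ps_mulZl; apply: ps_mul_eq_valid => // u' r' _; rewrite ps_mulZl.
Qed.

Lemma in_gen_ideal_gen b x y : ideal (mul (mul x (dW b)) y).
Proof. by exists [:: (b, x, y)] => u r; rewrite big_seq1. Qed.

Definition path_eqmod v X k Y := exists2 z, ideal z &
  forall u r, valid u r -> path v X u r = k * path v Y u r + z u r.

Lemma path_eqmod_refl v X : path_eqmod v X 1 X.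
Proof.
exists (@ps_zero K Q0 Q1) => [|u r _]; first exact: in_gen_ideal0.
by rewrite mul1r /ps_zero addr0.
Qed.

Lemma path_eqmod_trans v X Y Z k1 k2 :
  path_eqmod v X k1 Y -> path_eqmod v Y k2 Z -> path_eqmod v X (k1 * k2) Z.
Proof.
move=> [z1 I1 E1] [z2 I2 E2]; exists (ps_add (ps_scale k1 z2) z1).
  by apply: in_gen_idealD => //; apply: in_gen_idealZ.
by move=> u r V; rewrite E1 // E2 // /ps_add /ps_scale mulrDr mulrA addrA.
Qed.

Lemma path_eqmod_sym v X k Y : k != 0 -> path_eqmod v X k Y -> path_eqmod v Y k^-1 X.
Proof.
move=> nz_k [z I E]; exists (ps_scale (- k^-1) z); first exact: in_gen_idealZ.
by move=> u r V; rewrite E // /ps_scale mulrDr mulrA mulVf // mul1r mulNr addrK.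
Qed.

Lemma path_eqmod_subst b L R k w v p q :
  (forall u r, dW b u r = path (t b) L u r - k * path (t b) R u r) ->
  tgt (t b) L = w -> tgt (t b) R = w -> tgt v p = t b ->
  path_eqmod v (p ++ L ++ q) k (p ++ R ++ q).
Proof.
move=> EdW tL tR tp; exists (mul (mul (path v p) (dW b)) (path w q)).
  exact: in_gen_ideal_gen.
move=> u r V; rewrite addrC; apply/eqP; rewrite -subr_eq; apply/eqP; symmetry.
have E u' r' : valid u' r' ->
    mul (path v p) (dW b) u' r' = path v (p ++ L) u' r' - k * path v (p ++ R) u' r'.
  move=> V'; rewrite (ps_mul_eq_valid (x' := path v p)
    (y' := fun u r => path (t b) L u r - k * path (t b) R u r)) // ps_mulBr.
  by rewrite -tp !ps_mul_path.
rewrite (ps_mul_eq_valid (y' := path w q) E) // ps_mulBl.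
have tpL : tgt v (p ++ L) = w by rewrite path_tgt_cat tp.
have tpR : tgt v (p ++ R) = w by rewrite path_tgt_cat tp.
by rewrite -{1}tpL -tpR !ps_mul_path // !catA.
Qed.

Local Notation zero_in_J := (zero_in_jacobian s t dW).

Lemma zero_in_jacobian_eqmod v X k Y :
  path_eqmod v X k Y -> zero_in_J (path v Y) -> zero_in_J (path v X).
Proof.
move=> [z Iz EX] zY n; have [y [Iy Ey]] := zY n.
exists (ps_add (ps_scale k y) z); split.
  by apply: in_gen_idealD => //; apply: in_gen_idealZ.
by move=> u r V lt_rn; rewrite EX // Ey.
Qed.

(* A path of length at least n vanishes on all shorter paths. *)
Lemma zero_in_jacobian_long v X :
  (forall n, exists k Y, path_eqmod v X k Y /\ (n <= size Y)%N) -> zero_in_J (path v X).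
Proof.
move=> long n; have [k [Y [[z Iz EX] le_nY]]] := long n.
exists z; split=> // u r V lt_rn; rewrite EX // /ps_path.
have /negbTE -> : r != Y by apply: contraTneq lt_rn => ->; rewrite -leqNgt.
by rewrite andbF mulr0 add0r.
Qed.

Lemma zero_in_jacobian_loop v X k :
  path_eqmod v X k X -> k != 1 -> zero_in_J (path v X).
Proof.
move=> [z Iz EX] k_neq1 n; exists (ps_scale (1 - k)^-1 z); split.
  exact: in_gen_idealZ.
have nz_1k : 1 - k != 0 by rewrite subr_eq0 eq_sym.
move=> u r V _; apply: (mulfI nz_1k); rewrite /ps_scale mulrA mulfV // mul1r.
by rewrite mulrBl mul1r {1}EX // addrAC subrr add0r.
Qed.

End PathSeries.

Section Orbits.
Variables (T : finType) (h : T -> T).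
Hypothesis h_inj : injective h.

Lemma order_fconnect x y : fconnect h x y -> order h y = order h x.
Proof.
move=> xy; rewrite (eq_order_cycle (cycle_orbit h_inj x) (in_orbit h x)) //.
by rewrite -fconnect_orbit.
Qed.

Lemma orbit_rot_findex a b : fconnect h a b ->
  drop (findex h a b).+1 (orbit h a) ++ take (findex h a b) (orbit h a) =
  traject h (h b) (order h a).-1.
Proof.
move=> ab; have := findex_max ab; have := iter_findex ab; have := iter_order h_inj a.
rewrite /orbit; move: (findex h a b) (order h a) => i n Ha Hb lt_in.
have -> : traject h a n = traject h a i ++ b :: traject h (h b) (n - i.+1).
  by rewrite -trajectS -Hb -trajectD subnSK // subnKC // ltnW.
rewrite take_size_cat ?size_traject // -cat_rcons.
rewrite drop_size_cat ?size_rcons ?size_traject //.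
have -> : n.-1 = (n - i.+1 + i)%N by rewrite -{1}(subnKC lt_in) addSn addnC.
rewrite trajectD; congr (_ ++ traject _ _ _).
by rewrite -iterSr -subSn // subSS -Hb -iterD subnK // ltnW.
Qed.

Lemma big_froots_fconnect (V : nmodType) (F : T -> V) b :
  (forall a, froots h a -> ~~ fconnect h a b -> F a = 0) ->
  \sum_(a <- enum (froots h)) F a = F (froot h b).
Proof.
have sym_h := fconnect_sym h_inj.
have root_b : froot h b \in froots h by rewrite unfold_in (root_root sym_h).
move=> F0; rewrite (bigD1_seq (froot h b)) ?enum_uniq ?mem_enum //=.
rewrite big1_seq ?addr0 // => a /andP [ne_ab]; rewrite mem_enum => ra.
apply: F0 => //; apply: contra ne_ab => /(fingraph.rootP sym_h) <-.
by move: ra; rewrite unfold_in eq_sym.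
Qed.

End Orbits.

Section CyclicDerivative.
Variables (K : fieldType) (Q0 Q1 : finType) (t : Q1 -> Q0).
Local Notation path := (@ps_path K Q0 Q1).

Lemma cycderiv_seq_orbit (h : Q1 -> Q1) a b u r : injective h -> fconnect h a b ->
  cycderiv_seq K t b (orbit h a) u r = path (t b) (traject h (h b) (order h a).-1) u r.
Proof.
move=> h_inj ab; rewrite /cycderiv_seq size_orbit.
rewrite (big_pred1 (Ordinal (findex_max ab))) /= ?orbit_rot_findex // => i /=.
rewrite (set_nth_default a) ?size_orbit // nth_traject //.
apply/eqP/eqP => [iter_i | -> /=]; last exact: iter_findex.
by apply/val_inj; rewrite /= -iter_i findex_iter.
Qed.

Lemma cycderiv_seq_orbit0 (h : Q1 -> Q1) a b u r :
  ~~ fconnect h a b -> cycderiv_seq K t b (orbit h a) u r = 0.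
Proof.
move=> not_ab; rewrite /cycderiv_seq big1 // => i /eqP ith.
by case/negP: not_ab; rewrite fconnect_orbit -ith mem_nth.
Qed.

Variables (f g : Q1 -> Q1) (c : Q1 -> K).
Hypotheses (f_inj : injective f) (g_inj : injective g).
Hypothesis order_f : forall a, order f a = 3%N.
Hypothesis c_g : forall a, c (g a) = c a.

Lemma c_froot a : c (froot g a) = c a.
Proof.
symmetry; apply: (fconnect_invariant (f := g)) (connect_root _ a) => x.
by rewrite /invariant /= c_g eqxx.
Qed.

Lemma cycderiv_W_fg b u r :
  cycderiv t b (W_fg f g c) u r =
  path (t b) [:: f b; f (f b)] u r - c b * path (t b) (traject g (g b) (order g b).-1) u r.
Proof.
have root_b h : injective h -> fconnect h (froot h b) b.
  by move=> h_inj; rewrite fconnect_sym // connect_root.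
rewrite /cycderiv /W_fg big_cat !big_map.
rewrite (@big_froots_fconnect _ f f_inj _ _ b) => [|a _ not_ab]; last first.
  by rewrite -(order_f a) cycderiv_seq_orbit0 ?mulr0.
rewrite (@big_froots_fconnect _ g g_inj _ _ b) => [|a _ not_ab]; last first.
  by rewrite cycderiv_seq_orbit0 ?mulr0.
rewrite -(order_f (froot f b)) !cycderiv_seq_orbit ?root_b // order_f.
by rewrite (order_fconnect g_inj (root_b g g_inj)) c_froot mul1r mulNr.
Qed.

End CyclicDerivative.

Lemma neq_id_rot (T : eqType) (u v : T -> T) :
  (forall a, u (v a) != a) -> forall a, v (u a) != a.
Proof. by move=> uv a; apply: contra (uv (u a)) => /eqP ->. Qed.

Section Quiver.
Variables (K : fieldType) (Q0 Q1 : finType) (s t : Q1 -> Q0).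
Variables (f g : Q1 -> Q1) (c : Q1 -> K).
Hypothesis noloop : forall a, s a != t a.
Hypothesis no2cycle : forall a b, s a = t b -> t a = s b -> False.
Hypothesis outdeg2 : forall v, #|[set a | s a == v]| = 2%N.
Hypotheses (f_inj : injective f) (g_inj : injective g).
Hypothesis fg_out : forall a, [set f a; g a] = [set b | s b == t a].
Hypothesis fff : forall a, f (f (f a)) = a.
Hypothesis c_g : forall a, c (g a) = c a.

Local Notation m := (order g).

Lemma s_f a : s (f a) = t a.
Proof. by have := set21 (f a) (g a); rewrite fg_out inE => /eqP. Qed.

Lemma s_g a : s (g a) = t a.
Proof. by have := set22 (f a) (g a); rewrite fg_out inE => /eqP. Qed.

Lemma t_ff a : t (f (f a)) = s a.
Proof. by rewrite -s_f fff. Qed.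

Lemma f_neq_g a : f a != g a.
Proof. by have := outdeg2 (t a); rewrite -fg_out cards2; case: (f a != g a). Qed.

(* f y starts at t x, and it is not f x since y != x. *)
Lemma f_eq_g_of_tgt x y : x != y -> t x = t y -> f y = g x.
Proof.
move=> ne_xy txy; have : f y \in [set f x; g x] by rewrite fg_out inE s_f txy.
by rewrite !inE => /orP[/eqP/f_inj eq_yx | /eqP //]; rewrite eq_yx eqxx in ne_xy.
Qed.

Lemma f_neq_id a : f a != a.
Proof. by apply: contra (noloop a) => /eqP {1}<-; rewrite s_f. Qed.

Lemma ff_neq_id a : f (f a) != a.
Proof. by apply: contra (f_neq_id a) => /eqP ffa; rewrite -[X in _ == X]fff ffa. Qed.

Lemma order_f a : order f a = 3%N.
Proof.
have cyc : fcycle f [:: a; f a; f (f a)] by rewrite /= !eqxx fff eqxx.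
have uniq3 : uniq [:: a; f a; f (f a)].
  rewrite /= !inE !negb_or ![a == _]eq_sym f_neq_id ff_neq_id (inj_eq f_inj).
  by rewrite eq_sym f_neq_id.
by rewrite (order_cycle cyc uniq3) // mem_head.
Qed.

Lemma order_g_ge3 a : (3 <= m a)%N.
Proof.
have iter_m := iter_order g_inj a.
case E: (m a) (order_gt0 g a) iter_m => [|[|[|n]]] //= _ gm.
  by move: (noloop a); rewrite -{1}gm s_g eqxx.
by case: (no2cycle (a := a) (b := g a)); rewrite ?s_g // -s_g gm.
Qed.

Lemma path_tgt_traject_g a k : path_tgt t (s a) (traject g a k) = s (iter k g a).
Proof.
elim: k a => [|k IHk] a //=; rewrite /path_tgt /=.
by have := IHk (g a); rewrite /path_tgt s_g -iterSr.
Qed.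

Lemma path_tgt_g_cycle b : path_tgt t (t b) (traject g (g b) (m b).-1) = s b.
Proof.
by rewrite -s_g path_tgt_traject_g -iterSr prednK ?order_gt0 // iter_order.
Qed.

Local Notation dW := (fun b => cycderiv t b (W_fg f g c)).
Local Notation eqmod := (path_eqmod s t dW).
Local Notation zero_in_J v X := (zero_in_jacobian s t dW (ps_path K v X)).

Lemma eqmod_triangle v p q b : path_tgt t v p = t b ->
  eqmod v (p ++ [:: f b; f (f b)] ++ q) (c b) (p ++ traject g (g b) (m b).-1 ++ q).
Proof.
apply: path_eqmod_subst (cycderiv_W_fg _ f_inj g_inj order_f c_g b) _ _.
  by rewrite /path_tgt /= t_ff.
exact: path_tgt_g_cycle.
Qed.

Lemma g_ffg a : g (f (f (g a))) = f a.
Proof.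
have ne : f (f (g a)) != a.
  by apply: contra (f_neq_g a) => /eqP {1}<-; rewrite fff.
by symmetry; apply: f_eq_g_of_tgt ne _; rewrite t_ff s_g.
Qed.

Lemma fg_of_gg_ff x y : g (g y) = f (f x) -> f (g y) = g (f x).
Proof.
move=> ggy; apply: f_eq_g_of_tgt; last by rewrite -[t (g y)]s_g ggy s_f.
by apply: contra (f_neq_g (f x)) => /eqP fx; rewrite -ggy fx.
Qed.

Definition zigzag d := [:: d; f d; g (f d)].

Definition zz_next d := iter (m (f (f d)) - 2) g (f (f d)).

Lemma order_zz_next d : m (zz_next d) = m (f (f d)).
Proof. exact: (order_fconnect g_inj (fconnect_iter g _ _)). Qed.

Lemma gg_zz_next d : g (g (zz_next d)) = f (f d).
Proof.
rewrite /zz_next -!iterS -[in RHS](iter_order g_inj (f (f d))); congr (iter _ g _).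
by have := order_g_ge3 (f (f d)); lia.
Qed.

Lemma iter_zz_next d : iter (m (zz_next d) - 3) g (g (f (f d))) = zz_next d.
Proof.
rewrite order_zz_next -iterSr /zz_next; congr (iter _ g _).
by have := order_g_ge3 (f (f d)); lia.
Qed.

Lemma path_tgt_zz_next v p d : path_tgt t v p = s d ->
  path_tgt t v (p ++ traject g (g (f (f d))) (m (zz_next d) - 3)) = s (zz_next d).
Proof.
by move=> tp; rewrite path_tgt_cat tp -t_ff -s_g path_tgt_traject_g iter_zz_next.
Qed.

(* Two triangle substitutions, through f^2(d) and then through the arrow
   closing the g-cycle, turn a zigzag into a longer path containing the
   zigzag of [zz_next d]. *)
Lemma eqmod_zigzag_step v p q d : path_tgt t v p = s d ->
  eqmod v (p ++ zigzag d ++ q) (c (f (f d)) * c (f (f (g (zz_next d)))))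
    ((p ++ traject g (g (f (f d))) (m (zz_next d) - 3)) ++ zigzag (zz_next d) ++
     traject g (g (g (f (zz_next d)))) (m (f (zz_next d)) - 3) ++ q).
Proof.
move=> tp; set e := f (f d); set d' := zz_next d; set z := f (f (g d')).
set P := p ++ traject g (g e) (m d' - 3).
have md' : m d' = m e := order_zz_next d.
have L1 : p ++ zigzag d ++ q = p ++ [:: f e; f (f e)] ++ g (f d) :: q by rewrite /e !fff.
have L2 : p ++ traject g (g e) (m e).-1 ++ g (f d) :: q =
          rcons P d' ++ [:: f z; f (f z)] ++ q.
  have -> : (m e).-1 = (m d' - 3 + 2)%N.
    by have := order_g_ge3 e; lia.
  rewrite trajectD iter_zz_next /z !fff (fg_of_gg_ff (gg_zz_next d)).
  by rewrite /P -cats1 -!catA.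
have L3 : rcons P d' ++ traject g (g z) (m z).-1 ++ q =
          P ++ zigzag d' ++ traject g (g (g (f d'))) (m (f d') - 3) ++ q.
  have -> : m z = m (f d') by rewrite -(order_fconnect g_inj (fconnect1 g z)) g_ffg.
  have -> : (m (f d')).-1 = (m (f d') - 3).+2 by have := order_g_ge3 (f d'); lia.
  by rewrite g_ffg -cats1 -!catA.
have tp_e : path_tgt t v p = t e by rewrite tp t_ff.
have tp_z : path_tgt t v (rcons P d') = t z by rewrite path_tgt_rcons t_ff s_g.
rewrite L1 -L3; apply: path_eqmod_trans (eqmod_triangle _ tp_e) _.
by rewrite L2; apply: eqmod_triangle tp_z.
Qed.

Section Star.
Hypothesis star : forall a, (4 <= m a)%N \/ (4 <= m (f a))%N.

Lemma eqmod_zigzag_long n v p q d : path_tgt t v p = s d ->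
  exists k p' q' d', [/\ path_tgt t v p' = s d', (n <= size p' + size q')%N &
    eqmod v (p ++ zigzag d ++ q) k (p' ++ zigzag d' ++ q')].
Proof.
elim: n => [|n IHn] tp; first by exists 1, p, q, d; split=> //; apply: path_eqmod_refl.
have [k [p' [q' [d' [tp' le_n eqm]]]]] := IHn tp.
exists (k * (c (f (f d')) * c (f (f (g (zz_next d')))))).
exists (p' ++ traject g (g (f (f d'))) (m (zz_next d') - 3)).
exists (traject g (g (g (f (zz_next d')))) (m (f (zz_next d')) - 3) ++ q').
exists (zz_next d'); split.
- exact: path_tgt_zz_next.
- rewrite !size_cat !size_traject.
  have := star (zz_next d'); have := order_g_ge3 (zz_next d').
  by have := order_g_ge3 (f (zz_next d')); lia.
- exact: path_eqmod_trans eqm (eqmod_zigzag_step q' tp').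
Qed.

Lemma zero_zigzag_star d q : zero_in_J (s d) (zigzag d ++ q).
Proof.
apply: zero_in_jacobian_long => n.
have tp0 : path_tgt t (s d) [::] = s d by [].
have [k [p' [q' [d' [_ le_n eqm]]]]] := eqmod_zigzag_long n q tp0.
by exists k, (p' ++ zigzag d' ++ q'); split=> //; rewrite !size_cat; lia.
Qed.

End Star.

Lemma zero_relations_of_zigzag a : c a != 0 ->
  (forall q, zero_in_J (s a) (zigzag a ++ q)) ->
  zero_in_J (s a) [:: a; f a; f (f a); a] /\
  zero_in_J (s a) (rcons (traject g a (m a)) a).
Proof.
move=> nz_ca zero_zz.
have zero_f : zero_in_J (s a) [:: a; f a; f (f a); a].
  have -> : [:: a; f a; f (f a); a] = [:: a; f a] ++ [:: f (f a); f (f (f a))] ++ [::].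
    by rewrite fff.
  apply: zero_in_jacobian_eqmod (eqmod_triangle _ _) _ => //.
  have -> : (m (f a)).-1 = (m (f a) - 2).+1 by have := order_g_ge3 (f a); lia.
  by rewrite cats0; apply: zero_zz.
split=> //.
have -> : rcons (traject g a (m a)) a = [:: a] ++ traject g (g a) (m a).-1 ++ [:: a].
  by rewrite -{1}(prednK (order_gt0 g a)) /= cats1.
by apply: zero_in_jacobian_eqmod (path_eqmod_sym nz_ca (eqmod_triangle _ _)) _.
Qed.

Section Diamond.
Hypothesis order3 : forall a, m a = 3%N.
Hypothesis connected : quiver_connected s t.

Lemma ggg a : g (g (g a)) = a.
Proof. by have := iter_order g_inj a; rewrite order3. Qed.

Lemma zz_next3 d : zz_next d = g (f (f d)).
Proof. by rewrite /zz_next order3. Qed.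

Lemma gff_fgg a : g (f (f a)) = f (g (g a)).
Proof. by have := g_ffg (g (g a)); rewrite ggg. Qed.

Lemma ggf_ffg a : g (g (f a)) = f (f (g a)).
Proof. by apply: f_inj; rewrite fff -gff_fgg fff. Qed.

Lemma gfg_fgf a : g (f (g a)) = f (g (f a)).
Proof. by rewrite -{1}(fff (f (g a))) gff_fgg gff_fgg ggg. Qed.

(* With g-cycles of length 3 a zigzag step adds no arrow, and zz_next (zz_next d) = d. *)
Lemma eqmod_zigzag_loop q d :
  eqmod (s d) (zigzag d ++ q) (c d * c (f (f d)) * c (f (f (g d))) * c (f (g (f d))))
    (zigzag d ++ q).
Proof.
have tp0 : path_tgt t (s d) [::] = s d by [].
have tp1 := path_tgt_zz_next tp0.
have st1 := eqmod_zigzag_step q tp0; have st2 := eqmod_zigzag_step q tp1.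
rewrite !order3 subnn /= in st1 st2.
have := path_eqmod_trans st1 st2.
rewrite !zz_next3 g_ffg fff ggf_ffg gff_fgg !fff !c_g.
by rewrite mulrA (mulrAC (c (f (f d)))) [c (f (f d)) * c d]mulrC mulrAC.
Qed.

Local Ltac fg_normal := repeat progress rewrite ?fff ?ggg ?gff_fgg ?ggf_ffg ?gfg_fgf.

Lemma g_neq_id a : g a != a.
Proof. by apply: contra (noloop a) => /eqP {1}<-; rewrite s_g. Qed.

Lemma gg_neq_id a : g (g a) != a.
Proof. by apply/eqP => gga; have := ggg a; rewrite gga; apply/eqP/g_neq_id. Qed.

Lemma fgg_neq_id a : f (g (g a)) != a.
Proof. by apply: contra (f_neq_g (g (g a))) => /eqP {2}<-; rewrite ggg. Qed.

Lemma fg_neq_id a : f (g a) != a.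
Proof.
by apply: contra (ff_neq_id (g (g a))) => /eqP E; rewrite -{2}E; fg_normal.
Qed.

Lemma gf_neq_id a : g (f a) != a.
Proof. exact: neq_id_rot fg_neq_id a. Qed.

Lemma ffg_neq_id a : f (f (g a)) != a.
Proof.
by apply: (neq_id_rot (u := g) (v := f \o f)) => b /=; rewrite gff_fgg fgg_neq_id.
Qed.

Lemma fgf_neq_id a : f (g (f a)) != a.
Proof. exact: (neq_id_rot (u := f) (v := f \o g)) ffg_neq_id a. Qed.

Lemma ffgf_neq_id a : f (f (g (f a))) != a.
Proof.
by apply: (neq_id_rot (u := f) (v := f \o f \o g)) => b /=; rewrite fff g_neq_id.
Qed.

Lemma ffgg_neq_id a : f (f (g (g a))) != a.
Proof.
by apply: (neq_id_rot (u := g) (v := f \o f \o g)) => b /=; rewrite g_ffg f_neq_id.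
Qed.

Lemma fconnect_g3 r a : fconnect g r a -> [\/ a = r, a = g r | a = g (g r)].
Proof.
move=> ra; rewrite -(iter_findex ra); have := findex_max ra; rewrite order3.
by case: (findex g r a) => [|[|[|]]] // _; [apply: Or31 | apply: Or32 | apply: Or33].
Qed.

Section FourOrbits.
Variable d : Q1.

Definition in_four_orbits a :=
  [|| fconnect g d a, fconnect g (f (f d)) a, fconnect g (f (f (g d))) a
    | fconnect g (f (g (f d))) a].

Lemma in_four_orbits_g a : in_four_orbits a -> in_four_orbits (g a).
Proof.
by case/or4P => ra; apply/or4P; [apply: Or41 | apply: Or42 | apply: Or43 | apply: Or44];
  apply: connect_trans ra (fconnect1 _ _).
Qed.

Lemma in_four_orbits_f a : in_four_orbits a -> in_four_orbits (f a).
Proof.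
case/or4P => /fconnect_g3 [] ->; apply/or4P.
- have -> : f d = g (f (f (g d))) by fg_normal.
  by apply: Or43; apply: fconnect1.
- have -> : f (g d) = g (g (f (g (f d)))) by fg_normal.
  by apply: Or44; apply: (fconnect_iter g 2).
- have -> : f (g (g d)) = g (f (f d)) by fg_normal.
  by apply: Or42; apply: fconnect1.
- have -> : f (f (f d)) = d by fg_normal.
  by apply: Or41; apply: connect0.
- have -> : f (g (f (f d))) = g (f (g (f d))) by fg_normal.
  by apply: Or44; apply: fconnect1.
- have -> : f (g (g (f (f d)))) = g (g (f (f (g d)))) by fg_normal.
  by apply: Or43; apply: (fconnect_iter g 2).
- have -> : f (f (f (g d))) = g d by fg_normal.
  by apply: Or41; apply: fconnect1.
- have -> : f (g (f (f (g d)))) = f (f d) by fg_normal.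
  by apply: Or42; apply: connect0.
- have -> : f (g (g (f (f (g d))))) = f (g (f d)) by fg_normal.
  by apply: Or44; apply: connect0.
- have -> : f (f (g (f d))) = g (g (f (f d))) by fg_normal.
  by apply: Or42; apply: (fconnect_iter g 2).
- have -> : f (g (f (g (f d)))) = g (g d) by fg_normal.
  by apply: Or41; apply: (fconnect_iter g 2).
- have -> : f (g (g (f (g (f d))))) = f (f (g d)) by fg_normal.
  by apply: Or43; apply: connect0.
Qed.

(* The four orbits are closed under f and g, hence contain every arrow by connectivity. *)
Lemma in_four_orbits_all a : in_four_orbits a.
Proof.
pose out_in v := forall a, s a = v -> in_four_orbits a.
have out_closed b : in_four_orbits b -> out_in (t b).
  move=> Sb a' sa'; have : a' \in [set f b; g b] by rewrite fg_out inE sa'.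
  by rewrite !inE => /orP[] /eqP ->; [apply: in_four_orbits_f | apply: in_four_orbits_g].
have out_sd : out_in (s d).
  rewrite -t_ff; apply: out_closed.
  by apply/or4P; apply: Or42; apply: connect0.
have adj_out v w : quiver_adj s t v w -> out_in v -> out_in w.
  move=> /existsP[b /orP[] /andP[/eqP sb /eqP tb]] out_v.
    by rewrite -tb; apply: out_closed; apply: out_v.
  rewrite -sb -t_ff; apply: out_closed.
  by apply/in_four_orbits_f/out_v; rewrite s_f.
case/connectP: (connected (s d) (s a)) => p.
elim: p (s d) out_sd => [|w p IHp] v out_v /= => [_ sa | /andP[vw pw] sa].
  by apply: out_v; rewrite sa.
exact: IHp (adj_out _ _ vw out_v) pw sa.
Qed.

(* An equation between two words in f, g applied to d is refuted by applying
   the word [w] to both sides, normalizing, and invoking [w_neq_id]. *)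
Local Ltac refute_word w w_neq_id :=
  let E := fresh in let E' := fresh in
  move=> E; have := congr1 w E; rewrite /=; fg_normal => E';
  by move: (w_neq_id d); rewrite -E' eqxx.

Local Ltac not_g_connected w1 n1 w2 n2 w3 n3 :=
  apply/negP => /fconnect_g3 [];
  [refute_word w1 n1 | refute_word w2 n2 | refute_word w3 n3].

Lemma uniq_four_roots :
  uniq [:: froot g d; froot g (f (f d)); froot g (f (f (g d))); froot g (f (g (f d)))].
Proof.
have neq_root x y : ~~ fconnect g x y -> froot g x != froot g y.
  by move=> xy; rewrite (root_connect (fconnect_sym g_inj)).
have n12 : ~~ fconnect g (f (f d)) d.
  by not_g_connected (fun y : Q1 => y) ff_neq_id
       (fun y : Q1 => y) fgg_neq_id (fun y : Q1 => y) ffgf_neq_id.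
have n13 : ~~ fconnect g d (f (f (g d))).
  by not_g_connected (fun y => f (f (g y))) ffg_neq_id
       (fun y => f (f (g y))) ffgg_neq_id (fun y => f (f (g y))) ff_neq_id.
have n14 : ~~ fconnect g (f (g (f d))) d.
  by not_g_connected (fun y : Q1 => y) fgf_neq_id
       (fun y : Q1 => y) ffgg_neq_id (fun y : Q1 => y) fg_neq_id.
have n23 : ~~ fconnect g (f (f d)) (f (f (g d))).
  by not_g_connected (fun y => f (f (g y))) gg_neq_id
       (fun y => f (f (g y))) fgf_neq_id (fun y => f (f (g y))) f_neq_id.
have n24 : ~~ fconnect g (f (f d)) (f (g (f d))).
  by not_g_connected (fun y => f (g (f y))) fg_neq_id
       (fun y => f (g (f y))) ffg_neq_id (fun y => f (g (f y))) g_neq_id.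
have n34 : ~~ fconnect g (f (g (f d))) (f (f (g d))).
  by not_g_connected (fun y => f (f (g y))) fgg_neq_id
       (fun y => f (f (g y))) g_neq_id (fun y => f (f (g y))) gf_neq_id.
rewrite /= !inE !negb_or andbT.
rewrite [froot g d == _]eq_sym neq_root // neq_root // [froot g d == _]eq_sym neq_root //.
by rewrite neq_root // neq_root // eq_sym neq_root.
Qed.

Lemma prod_froots_c :
  \prod_(a | froots g a) c a = c d * c (f (f d)) * c (f (f (g d))) * c (f (g (f d))).
Proof.
have sym_g := fconnect_sym g_inj.
pose L := [:: froot g d; froot g (f (f d)); froot g (f (f (g d))); froot g (f (g (f d)))].
have memL a : (a \in L) = froots g a.
  apply/idP/idP => [|ra].
    by rewrite !inE => /or4P[] /eqP ->; rewrite /roots (root_root sym_g).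
  have root_a r : fconnect g r a -> froot g r = a.
    by move=> /(fingraph.rootP sym_g) ->; apply/eqP.
  by have := in_four_orbits_all a; rewrite !inE => /or4P[] /root_a ->;
    rewrite eqxx ?orbT.
rewrite (eq_bigl (mem L)) => [|a]; last by rewrite /= memL.
by rewrite -big_uniq ?uniq_four_roots // !big_cons big_nil !(c_froot c_g) /= mulr1 !mulrA.
Qed.

End FourOrbits.

Lemma zero_zigzag_diamond d q :
  \prod_(a | froots g a) c a != 1 -> zero_in_J (s d) (zigzag d ++ q).
Proof.
move=> ne1; apply: zero_in_jacobian_loop (eqmod_zigzag_loop q d) _.
by rewrite -prod_froots_c.
Qed.

End Diamond.
End Quiver.

Unset Implicit Arguments.

Theorem lemma4p1 (K : fieldType) (Q0 Q1 : finType) (s t : Q1 -> Q0)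
    (f g : Q1 -> Q1) (c : Q1 -> K) :
  quiver_connected s t ->
  (forall a, s a != t a) ->                              (* no loops *)
  (forall a b, s a = t b -> t a = s b -> False) ->       (* no 2-cycles *)
  (forall v, #|[set a | s a == v]| = 2%N) ->
  (forall v, #|[set a | t a == v]| = 2%N) ->
  bijective f -> bijective g ->
  (forall a, [set f a; g a] = [set b | s b == t a]) ->
  (forall a, f (f (f a)) = a) ->
  (forall a, c a != 0) ->
  (forall a, c (g a) = c a) ->
  ((forall a, (4 <= fingraph.order g a)%N \/ (4 <= fingraph.order g (f a))%N) \/
   ((forall a, fingraph.order g a = 3%N) /\ \prod_(a | froots g a) c a != 1)) ->
  forall a : Q1,
    zero_in_jacobian s t (fun b => cycderiv t b (W_fg f g c))
      (ps_path K (s a) [:: a; f a; f (f a); a]) /\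
    zero_in_jacobian s t (fun b => cycderiv t b (W_fg f g c))
      (ps_path K (s a) (rcons (traject g a (fingraph.order g a)) a)).
Proof.
move=> connected noloop no2cycle outdeg2 _ /bij_inj f_inj /bij_inj g_inj fg_out fff nz_c c_g
  star_or_diamond a.
apply: (zero_relations_of_zigzag noloop no2cycle f_inj g_inj fg_out fff c_g (nz_c a)) => q.
case: star_or_diamond => [star | [order3 prod_neq1]].
- exact: (zero_zigzag_star noloop no2cycle outdeg2 f_inj g_inj fg_out fff c_g star).
- exact: (zero_zigzag_diamond noloop no2cycle outdeg2 f_inj g_inj fg_out fff c_g order3
            connected a q prod_neq1).
Qed.
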